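(* If $\varphi$ is a closed block-labelled formula in disjunctive form, then $\mathrm{dec}_s(\mathrm{enc}(\varphi), \varphi, \emptyset) =_f \varphi$, for any bijective renaming $f$ of propositional variables such that $f(X^k) = [\varphi[X^k]]^k$ for every $X^k\in\mathrm{bv}(\varphi)$.
   Context: An LTS is a tuple $(\Sigma, A, \to, s_0)$ with state set $\Sigma$, label set $A$, transition relation $\to\,\subseteq \Sigma\times A\times\Sigma$ (written $s \xrightarrow{a} s'$) and initial state $s_0$. Block-labelled formulas in disjunctive form are generated by $\varphi ::= \mathbf{ff} \mid \varphi_1 \lor \varphi_2 \mid \langle a\rangle\varphi_0 \mid \mu X^k.\varphi_0 \mid \neg\varphi_0 \mid X^k$, where $a$ ranges over action labels, $X$ over propositional variables and $k\in\mathbb{N}$ is a block number attached to every variable occurrence. $\mathrm{fv}(\varphi)$ and $\mathrm{bv}(\varphi)$ denote the free and bound variables; $\varphi$ is closed if $\mathrm{fv}(\varphi)=\emptyset$. All bound variables are assumed to have distinct names, and for $X^k\in\mathrm{bv}(\varphi)$, $\varphi[X^k]$ denotes the unique sub-formula of $\varphi$ of the form $\mu X^k.\varphi_0$. Encoding: $\mathrm{enc}(\varphi)$ is the LTS whose states are the sub-formulas of $\varphi$, with initial state $\varphi$, where $\mathbf{ff}$ has no outgoing transitions and the transitions are exactly: $X^k \xrightarrow{\lor} \varphi[X^k]$; $\neg\varphi_0 \xrightarrow{\neg} \varphi_0$; $\langle a\rangle\varphi_0 \xrightarrow{\langle a\rangle}\varphi_0$; $\varphi_1\lor\varphi_2 \xrightarrow{\lor}\varphi_1$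 and $\varphi_1\lor\varphi_2\xrightarrow{\lor}\varphi_2$; $\mu X^k.\varphi_0 \xrightarrow{\mu^k}\varphi_0$. (Labels are the symbols $\lor$, $\neg$, $\langle a\rangle$, $\mu^k$.) Decoding: for an LTS $P$ with labels of the forms $\lor,\neg,\langle a\rangle,\mu^k$, a state $s$ and a set $E$ of states, $\mathrm{dec}_s(P,s,E) = \bigvee_{s\xrightarrow{\sigma}s' \in P}\mathrm{dec}_t(P, s\xrightarrow{\sigma}s', E)$ (a disjunction built with binary $\lor$ in some enumeration order of the outgoing transitions; the empty disjunction is $\mathbf{ff}$), where $\mathrm{dec}_t(P,s\xrightarrow{\lor}s',E)=\mathrm{dec}_s(P,s',E)$, $\mathrm{dec}_t(P,s\xrightarrow{\neg}s',E)=\neg\mathrm{dec}_s(P,s',E)$, $\mathrm{dec}_t(P,s\xrightarrow{\langle a\rangle}s',E)=\langle a\rangle\mathrm{dec}_s(P,s',E)$, and $\mathrm{dec}_t(P,s\xrightarrow{\mu^k}s',E)$ equals $[s]^k$ if $s\in E$ and $\mu [s]^k.\mathrm{dec}_s(P,s',E\cup\{s\})$ otherwise. Here $[s]^k$ denotes a propositional variable with block number $k$ uniquely determined by the pair $(s,k)$. Equality modulo renaming, commutativity and idempotence: for a bijection $f$ on propositional variables, $=_f$ is the smallest relation on formulas such that whenever $\varphi_i =_f \varphi_i'$ ($i\in\{0,1,2\}$): $\mathbf{ff}=_f\mathbf{ff}$, $\neg\varphi_0=_f\neg\varphi_0'$, $\langle a\rangle\varphi_0=_f\langle a\rangle\varphi_0'$,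 $\varphi_1\lor\varphi_2=_f\varphi_1'\lor\varphi_2'$, $X=_f f(X)$ and $\mu X.\varphi_0=_f\mu f(X).\varphi_0'$ for every variable $X$; $\varphi_1\lor\varphi_2 =_f \varphi_2'\lor\varphi_1'$; $\varphi_0\lor\varphi_0=_f\varphi_0'$ and $\varphi_0=_f\varphi_0'\lor\varphi_0'$. *)

From Stdlib Require Import List.
Import ListNotations.
Set Implicit Arguments.

Section Formulas.
Variables (A : Type)   (* names of propositional variables (without block number) *)
          (L : Type).

(* A propositional variable X^k is the pair (X, k). *)
Inductive form : Type :=
| FF : form
| Or : form -> form -> form
| Dia : L -> form -> form
| Mu : A -> nat -> form -> form
| Neg : form -> form
| Var : A -> nat -> form.

Inductive subform : form -> form -> Prop :=
| sub_refl p : subform p p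
| sub_or1 p a b : subform p a -> subform p (Or a b)
| sub_or2 p a b : subform p b -> subform p (Or a b)
| sub_dia p c q : subform p q -> subform p (Dia c q)
| sub_mu p x k q : subform p q -> subform p (Mu x k q)
| sub_neg p q : subform p q -> subform p (Neg q).

Inductive free_in (v : A * nat) : form -> Prop :=
| fr_var x k : v = (x, k) -> free_in v (Var x k)
| fr_or1 a b : free_in v a -> free_in v (Or a b)
| fr_or2 a b : free_in v b -> free_in v (Or a b)
| fr_dia c q : free_in v q -> free_in v (Dia c q)
| fr_neg q : free_in v q -> free_in v (Neg q)
| fr_mu x k q : free_in v q -> v <> (x, k) -> free_in v (Mu x k q).

Definition closed (phi : form) : Prop := forall v, ~ free_in v phi.

(* the list of binder occurrences; "all bound variables have distinct names"
   is NoDup (binders phi) *)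
Fixpoint binders (phi : form) : list (A * nat) :=
  match phi with
  | FF | Var _ _ => []
  | Or a b => binders a ++ binders b
  | Dia _ q | Neg q => binders q
  | Mu x k q => (x, k) :: binders q
  end.

Inductive label : Type :=
| LOr : label
| LNeg : label
| LDia : L -> label
| LMu : nat -> label.

Record lts (S : Type) : Type := {
  states : S -> Prop;
  trans : S -> label -> S -> Prop;
  init : S }.

(* transitions of enc(r) (before restricting sources to sub-formulas of r) *)
Inductive step (r : form) : form -> label -> form -> Prop :=
| st_var x k q : subform (Mu x k q) r -> step r (Var x k) LOr (Mu x k q)
| st_neg q : step r (Neg q) LNeg q
| st_dia c q : step r (Dia c q) (LDia c) q
| st_or1 a b : step r (Or a b) LOr a
| st_or2 a b : step r (Or a b) LOr b
| st_mu x k q : step r (Mu x k q) (LMu k) q.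

Definition enc (phi : form) : lts form :=
  {| states := fun s => subform s phi;
     trans := fun s l s' => subform s phi /\ step phi s l s';
     init := phi |}.

(* Decoding, as a relation (the result depends on the chosen enumeration
   order of outgoing transitions; only terminating decodings are derivable).
   [s]^k is the variable (name s k, k). *)
Section Dec.
Variables (S : Type) (name : S -> nat -> A) (P : lts S).

Inductive dec_s : S -> list S -> form -> Prop :=
| DecS s E (ts : list (label * S)) psi :
    NoDup ts ->
    (forall l s', In (l, s') ts <-> trans P s l s') ->
    dec_list s E ts psi ->
    dec_s s E psi
with dec_list : S -> list S -> list (label * S) -> form -> Prop :=
| DL_nil s E : dec_list s E [] FF
| DL_one s E t psi : dec_t s t E psi -> dec_list s E [t] psi
| DL_cons s E t t' ts psi1 psi2 :
    dec_t s t E psi1 -> dec_list s E (t' :: ts) psi2 ->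
    dec_list s E (t :: t' :: ts) (Or psi1 psi2)
with dec_t : S -> label * S -> list S -> form -> Prop :=
| DT_or s s' E psi : dec_s s' E psi -> dec_t s (LOr, s') E psi
| DT_neg s s' E psi : dec_s s' E psi -> dec_t s (LNeg, s') E (Neg psi)
| DT_dia s c s' E psi : dec_s s' E psi -> dec_t s (LDia c, s') E (Dia c psi)
| DT_mu_in s k s' E : In s E -> dec_t s (LMu k, s') E (Var (name s k) k)
| DT_mu_out s k s' E psi :
    ~ In s E -> dec_s s' (s :: E) psi ->
    dec_t s (LMu k, s') E (Mu (name s k) k psi).
End Dec.

Inductive eqf (f : A * nat -> A * nat) : form -> form -> Prop :=
| eq_ff : eqf f FF FF
| eq_neg p p' : eqf f p p' -> eqf f (Neg p) (Neg p')
| eq_dia c p p' : eqf f p p' -> eqf f (Dia c p) (Dia c p')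
| eq_or a b a' b' : eqf f a a' -> eqf f b b' -> eqf f (Or a b) (Or a' b')
| eq_var x k : eqf f (Var x k) (Var (fst (f (x, k))) (snd (f (x, k))))
| eq_mu x k p p' : eqf f p p' ->
    eqf f (Mu x k p) (Mu (fst (f (x, k))) (snd (f (x, k))) p')
| eq_comm a b a' b' : eqf f a a' -> eqf f b b' -> eqf f (Or a b) (Or b' a')
| eq_idem_l p p' : eqf f p p' -> eqf f (Or p p) p'
| eq_idem_r p p' : eqf f p p' -> eqf f p (Or p' p').

End Formulas.

Definition bijective_map {X : Type} (f : X -> X) : Prop :=
  exists g : X -> X, (forall x, g (f x) = x) /\ (forall y, f (g y) = y).

From Stdlib Require Import List Permutation Classical Lia.
Import ListNotations.
Set Implicit Arguments.

(* Decoding a state s enumerates the outgoing transitions of s in some order;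
   since these are listed without repetition, any such enumeration is a
   permutation of a fixed list.  In enc(phi) every sub-formula has at most two
   outgoing transitions, so the decoding of s is determined, up to the order of
   the two disjuncts of an [Or], by the decodings of its successors.  We
   therefore prove, by structural induction on a sub-formula s of phi, that
   decoding s in a context E of already visited fixpoints succeeds and yields a
   formula equal to s modulo f, provided E is "adequate" for s: E consists of
   strictly larger sub-formulas of phi (so s itself has not been visited yet)
   and binds every free variable of s.  The bound-variable case uses that in a
   formula with distinct binders a variable X^k has a unique defining
   fixpoint, and the fixpoint case uses that f renames X^k to [phi[X^k]]^k.
   The theorem is the case s = phi, E = [], where closedness of phi makes the
   empty context adequate. *)

Section DecodingAnyLTS.
Variables (A L S : Type) (name : S -> nat -> A) (P : lts L S).

Definition outgoing (s : S) (out : list (label L * S)) : Prop :=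
  NoDup out /\ forall l s', In (l, s') out <-> trans P s l s'.

Lemma dec_s_permutation s E out psi :
  outgoing s out -> dec_s name P s E psi ->
  exists ts, Permutation out ts /\ dec_list name P s E ts psi.
Proof.
  intros [Hnodup Hout] Hdec.
  destruct Hdec as [s E ts psi Hts Hin Hlist].
  exists ts; split; [|exact Hlist].
  apply NoDup_Permutation; auto.
  intros [l s']; rewrite Hout, Hin; reflexivity.
Qed.

Lemma dec_s_none s E psi :
  outgoing s [] -> (dec_s name P s E psi <-> psi = FF A L).
Proof.
  intros Hout; split.
  - intros Hdec.
    destruct (dec_s_permutation Hout Hdec) as (ts & Hperm & Hlist).
    rewrite (Permutation_nil Hperm) in Hlist.
    inversion Hlist; reflexivity.
  - intros ->; destruct Hout as [Hnodup Hin].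
    exact (DecS Hnodup Hin (DL_nil _ _ _ _)).
Qed.

Lemma dec_s_one s E t psi :
  outgoing s [t] -> (dec_s name P s E psi <-> dec_t name P s t E psi).
Proof.
  intros Hout; split.
  - intros Hdec.
    destruct (dec_s_permutation Hout Hdec) as (ts & Hperm & Hlist).
    rewrite (Permutation_length_1_inv Hperm) in Hlist.
    inversion Hlist; subst; assumption.
  - intros Ht; destruct Hout as [Hnodup Hin].
    exact (DecS Hnodup Hin (DL_one Ht)).
Qed.

Lemma dec_s_two s E t1 t2 psi1 psi2 :
  outgoing s [t1; t2] ->
  dec_t name P s t1 E psi1 -> dec_t name P s t2 E psi2 ->
  dec_s name P s E (Or psi1 psi2).
Proof.
  intros [Hnodup Hin] H1 H2.
  exact (DecS Hnodup Hin (DL_cons H1 (DL_one H2))).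
Qed.

Lemma dec_s_two_inv s E t1 t2 psi :
  outgoing s [t1; t2] -> dec_s name P s E psi ->
  exists psi1 psi2, dec_t name P s t1 E psi1 /\ dec_t name P s t2 E psi2 /\
    (psi = Or psi1 psi2 \/ psi = Or psi2 psi1).
Proof.
  intros Hout Hdec.
  destruct (dec_s_permutation Hout Hdec) as (ts & Hperm & Hlist).
  destruct (Permutation_length_2_inv Hperm) as [-> | ->];
    inversion Hlist as [| | ? ? ? ? ? psi1 psi2 H1 Hrest]; subst;
    inversion Hrest; subst; eauto 6.
Qed.

End DecodingAnyLTS.

Section Formulas.
Variables (A L : Type).

(* Size of a formula; contexts of visited fixpoints are bounded by it. *)
Fixpoint fsize (p : form A L) : nat :=
  match p with
  | FF _ _ | Var _ _ _ => 1
  | Or a b => S (fsize a + fsize b)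
  | Dia _ q | Neg q | Mu _ _ q => S (fsize q)
  end.

Lemma subform_trans (p q r : form A L) :
  subform p q -> subform q r -> subform p r.
Proof. intros Hpq Hqr; induction Hqr; eauto using subform. Qed.

Lemma subform_mu_binders x k (q p : form A L) :
  subform (Mu x k q) p -> In (x, k) (binders p).
Proof.
  intros H; induction p; inversion H; subst; simpl; auto using in_or_app.
Qed.

Lemma NoDup_app_disjoint {T : Type} (l l' : list T) a :
  NoDup (l ++ l') -> In a l -> In a l' -> False.
Proof.
  intros Hnodup Hl Hl'. apply in_split in Hl' as (l1 & l2 & ->).
  rewrite app_assoc in Hnodup. apply (NoDup_remove_2 _ _ _ Hnodup).
  apply in_or_app; left; apply in_or_app; auto.
Qed.

Lemma mu_body_unique (p : form A L) x k q1 q2 :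
  NoDup (binders p) -> subform (Mu x k q1) p -> subform (Mu x k q2) p ->
  q1 = q2.
Proof.
  induction p; simpl; intros Hnodup H1 H2;
    inversion H1; subst; inversion H2; subst.
  - eapply IHp1; eauto using NoDup_app_remove_r.
  - exfalso; eapply NoDup_app_disjoint; eauto using subform_mu_binders.
  - exfalso; eapply NoDup_app_disjoint; eauto using subform_mu_binders.
  - eapply IHp2; eauto using NoDup_app_remove_l.
  - eapply IHp; eauto.
  - reflexivity.
  - inversion Hnodup; subst; exfalso; eauto using subform_mu_binders.
  - inversion Hnodup; subst; exfalso; eauto using subform_mu_binders.
  - inversion Hnodup; subst; eapply IHp; eauto.
  - eapply IHp; eauto.
Qed.

Lemma eqf_var_renamed (f : A * nat -> A * nat) x k y j :
  f (x, k) = (y, j) -> eqf f (Var L x k) (Var L y j).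
Proof.
  intros Hf. replace (Var L y j) with (Var L (fst (f (x, k))) (snd (f (x, k)))).
  - apply eq_var.
  - rewrite Hf; reflexivity.
Qed.

Lemma eqf_mu_renamed (f : A * nat -> A * nat) x k y j (p p' : form A L) :
  f (x, k) = (y, j) -> eqf f p p' -> eqf f (Mu x k p) (Mu y j p').
Proof.
  intros Hf Hp. replace (Mu y j p') with (Mu (fst (f (x, k))) (snd (f (x, k))) p').
  - apply eq_mu; exact Hp.
  - rewrite Hf; reflexivity.
Qed.

End Formulas.

Section DecodingEnc.
Variables (A L : Type) (name : form A L -> nat -> A)
          (f : A * nat -> A * nat) (phi : form A L).
Hypothesis distinct_binders : NoDup (binders phi).
Hypothesis f_renames :
  forall x k q, subform (Mu x k q) phi -> f (x, k) = (name (Mu x k q) k, k).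

Lemma enc_outgoing s out :
  subform s phi -> NoDup out ->
  (forall l s', In (l, s') out <-> step phi s l s') ->
  outgoing (enc phi) s out.
Proof.
  intros Hs Hnodup Hout; split; [exact Hnodup|].
  intros l s'; rewrite Hout; simpl; tauto.
Qed.

Ltac steps_of_constructor :=
  intros l s'; simpl; split;
  [ intros H; repeat destruct H as [H|H]; try contradiction;
    injection H as <- <-; constructor
  | inversion 1; subst; auto ].

Lemma outgoing_ff : subform (FF A L) phi -> outgoing (enc phi) (FF A L) [].
Proof. intros Hs; apply enc_outgoing; [exact Hs|constructor|steps_of_constructor]. Qed.

Lemma outgoing_neg q :
  subform (Neg q) phi -> outgoing (enc phi) (Neg q) [(LNeg L, q)].
Proof.
  intros Hs; apply enc_outgoing; [exact Hs|repeat constructor; auto|].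
  steps_of_constructor.
Qed.

Lemma outgoing_dia c q :
  subform (Dia c q) phi -> outgoing (enc phi) (Dia c q) [(LDia c, q)].
Proof.
  intros Hs; apply enc_outgoing; [exact Hs|repeat constructor; auto|].
  steps_of_constructor.
Qed.

Lemma outgoing_mu x k q :
  subform (Mu x k q) phi -> outgoing (enc phi) (Mu x k q) [(LMu L k, q)].
Proof.
  intros Hs; apply enc_outgoing; [exact Hs|repeat constructor; auto|].
  steps_of_constructor.
Qed.

Lemma outgoing_or_same a :
  subform (Or a a) phi -> outgoing (enc phi) (Or a a) [(LOr L, a)].
Proof.
  intros Hs; apply enc_outgoing; [exact Hs|repeat constructor; auto|].
  steps_of_constructor.
Qed.

Lemma outgoing_or a b :
  a <> b -> subform (Or a b) phi ->
  outgoing (enc phi) (Or a b) [(LOr L, a); (LOr L, b)].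
Proof.
  intros Hne Hs; apply enc_outgoing; [exact Hs| |steps_of_constructor].
  constructor; [|repeat constructor; auto].
  simpl; intros [Heq|[]]; congruence.
Qed.

Lemma outgoing_var x k q :
  subform (Var L x k) phi -> subform (Mu x k q) phi ->
  outgoing (enc phi) (Var L x k) [(LOr L, Mu x k q)].
Proof.
  intros Hs Hmu; apply enc_outgoing; [exact Hs|repeat constructor; auto|].
  intros l s'; simpl; split.
  - intros [Heq|[]]; injection Heq as <- <-; constructor; exact Hmu.
  - inversion 1 as [? ? q' Hmu'| | | | |]; subst; left.
    rewrite (mu_body_unique distinct_binders Hmu Hmu'); reflexivity.
Qed.

Definition decodes_correctly (s : form A L) (E : list (form A L)) : Prop :=
  (exists psi, dec_s name (enc phi) s E psi) /\
  (forall psi, dec_s name (enc phi) s E psi -> eqf f s psi).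

Lemma decode_ff E : subform (FF A L) phi -> decodes_correctly (FF A L) E.
Proof.
  intros Hs; pose proof (outgoing_ff Hs) as Hout; split.
  - exists (FF A L); apply (dec_s_none name E _ Hout); reflexivity.
  - intros psi Hdec; apply (dec_s_none name E _ Hout) in Hdec; subst; constructor.
Qed.

Lemma decode_neg q E :
  subform (Neg q) phi -> decodes_correctly q E -> decodes_correctly (Neg q) E.
Proof.
  intros Hs [[psi Hpsi] Hq]; pose proof (outgoing_neg Hs) as Hout; split.
  - exists (Neg psi); apply (dec_s_one name E _ Hout); constructor; exact Hpsi.
  - intros psi' Hdec; apply (dec_s_one name E _ Hout) in Hdec.
    inversion Hdec; subst; constructor; auto.
Qed.

Lemma decode_dia c q E :
  subform (Dia c q) phi -> decodes_correctly q E ->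
  decodes_correctly (Dia c q) E.
Proof.
  intros Hs [[psi Hpsi] Hq]; pose proof (outgoing_dia Hs) as Hout; split.
  - exists (Dia c psi); apply (dec_s_one name E _ Hout); constructor; exact Hpsi.
  - intros psi' Hdec; apply (dec_s_one name E _ Hout) in Hdec.
    inversion Hdec; subst; constructor; auto.
Qed.

(* [a \/ a] decodes like [a]; this is where idempotence is needed. *)
Lemma decode_or_same a E :
  subform (Or a a) phi -> decodes_correctly a E ->
  decodes_correctly (Or a a) E.
Proof.
  intros Hs [[psi Hpsi] Ha]; pose proof (outgoing_or_same Hs) as Hout; split.
  - exists psi; apply (dec_s_one name E _ Hout); constructor; exact Hpsi.
  - intros psi' Hdec; apply (dec_s_one name E _ Hout) in Hdec.
    inversion Hdec; subst; apply eq_idem_l; auto.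
Qed.

(* [a \/ b] decodes to a disjunction in either order; this is where
   commutativity is needed. *)
Lemma decode_or a b E :
  a <> b -> subform (Or a b) phi ->
  decodes_correctly a E -> decodes_correctly b E ->
  decodes_correctly (Or a b) E.
Proof.
  intros Hne Hs [[psi1 H1] Ha] [[psi2 H2] Hb].
  pose proof (outgoing_or Hne Hs) as Hout; split.
  - exists (Or psi1 psi2); apply (dec_s_two Hout); constructor; assumption.
  - intros psi Hdec.
    destruct (dec_s_two_inv Hout Hdec) as (psi1' & psi2' & Ht1 & Ht2 & [-> | ->]);
      inversion Ht1; inversion Ht2; subst.
    + apply eq_or; auto.
    + apply eq_comm; auto.
Qed.

(* A fixpoint met for the first time is decoded as a fixpoint binding
   [[Mu x k q]]^k, which is f(X^k). *)
Lemma decode_mu_fresh x k q E :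
  subform (Mu x k q) phi -> ~ In (Mu x k q) E ->
  decodes_correctly q (Mu x k q :: E) -> decodes_correctly (Mu x k q) E.
Proof.
  intros Hs Hfresh [[psi Hpsi] Hq]; pose proof (outgoing_mu Hs) as Hout; split.
  - exists (Mu (name (Mu x k q) k) k psi).
    apply (dec_s_one name E _ Hout); apply DT_mu_out; assumption.
  - intros psi' Hdec; apply (dec_s_one name E _ Hout) in Hdec.
    inversion Hdec; subst; [contradiction|].
    apply eqf_mu_renamed; auto.
Qed.

Lemma decode_mu_visited x k q E psi :
  subform (Mu x k q) phi -> In (Mu x k q) E ->
  dec_s name (enc phi) (Mu x k q) E psi <-> psi = Var L (name (Mu x k q) k) k.
Proof.
  intros Hs Hvisited; rewrite (dec_s_one name E _ (outgoing_mu Hs)); split.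
  - inversion 1; subst; [reflexivity|contradiction].
  - intros ->; apply DT_mu_in; exact Hvisited.
Qed.

(* A variable bound in the context steps to its fixpoint, which has been
   visited, so it decodes to the variable f(X^k). *)
Lemma decode_var x k q E :
  subform (Var L x k) phi -> subform (Mu x k q) phi -> In (Mu x k q) E ->
  decodes_correctly (Var L x k) E.
Proof.
  intros Hs Hmu Hvisited; pose proof (outgoing_var Hs Hmu) as Hout; split.
  - exists (Var L (name (Mu x k q) k) k).
    apply (dec_s_one name E _ Hout); constructor.
    apply decode_mu_visited; auto.
  - intros psi Hdec; apply (dec_s_one name E _ Hout) in Hdec.
    inversion Hdec as [? ? ? psi' Hpsi'| | | |]; subst.
    apply (decode_mu_visited E psi Hmu Hvisited) in Hpsi'; subst.
    apply eqf_var_renamed, f_renames; exact Hmu.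
Qed.

Definition adequate (s : form A L) (E : list (form A L)) : Prop :=
  (forall e, In e E -> subform e phi /\ fsize s < fsize e) /\
  (forall x k, free_in (x, k) s -> exists q, In (Mu x k q) E).

Lemma adequate_child s q E :
  adequate s E -> fsize q < fsize s ->
  (forall v, free_in v q -> free_in v s) -> adequate q E.
Proof.
  intros [Hlarger Hbinds] Hsize Hfree; split.
  - intros e He; destruct (Hlarger e He); split; [assumption|lia].
  - intros x k Hx; apply Hbinds, Hfree; exact Hx.
Qed.

Lemma adequate_body x k q E :
  subform (Mu x k q) phi -> adequate (Mu x k q) E ->
  adequate q (Mu x k q :: E).
Proof.
  intros Hs [Hlarger Hbinds]; split.
  - intros e [<- | He]; [simpl; split; [exact Hs|lia]|].
    destruct (Hlarger e He); simpl in *; split; [assumption|lia].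
  - intros y j Hy; destruct (classic ((y, j) = (x, k))) as [Heq | Hne].
    + injection Heq as -> ->; exists q; left; reflexivity.
    + destruct (Hbinds y j) as [q' Hq']; [apply fr_mu; assumption|].
      exists q'; right; exact Hq'.
Qed.

Lemma adequate_not_visited s E : adequate s E -> ~ In s E.
Proof. intros [Hlarger _] Hin; destruct (Hlarger s Hin); lia. Qed.

Lemma adequate_var x k E :
  adequate (Var L x k) E -> exists q, In (Mu x k q) E /\ subform (Mu x k q) phi.
Proof.
  intros [Hlarger Hbinds].
  destruct (Hbinds x k) as [q Hq]; [constructor; reflexivity|].
  exists q; split; [exact Hq|apply Hlarger; exact Hq].
Qed.

Lemma adequate_closed : closed phi -> adequate phi [].
Proof.
  intros Hclosed; split; [intros e []|].
  intros x k Hx; destruct (Hclosed _ Hx).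
Qed.

Lemma decode_subformula s E :
  subform s phi -> adequate s E -> decodes_correctly s E.
Proof.
  revert E; induction s as [| a IHa b IHb | c q IH | x k q IH | q IH | x k];
    intros E Hs Hadequate.
  - apply decode_ff; exact Hs.
  - assert (Ha : decodes_correctly a E).
    { apply IHa; [eauto using subform_trans, subform|].
      apply (adequate_child Hadequate); [simpl; lia|eauto using free_in]. }
    assert (Hb : decodes_correctly b E).
    { apply IHb; [eauto using subform_trans, subform|].
      apply (adequate_child Hadequate); [simpl; lia|eauto using free_in]. }
    destruct (classic (a = b)) as [<- | Hne].
    + apply decode_or_same; assumption.
    + apply decode_or; assumption.
  - apply decode_dia; [exact Hs|].
    apply IH; [eauto using subform_trans, subform|].
    apply (adequate_child Hadequate); [simpl; lia|eauto using free_in].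
  - apply decode_mu_fresh; [exact Hs|apply adequate_not_visited; exact Hadequate|].
    apply IH; [eauto using subform_trans, subform|].
    apply adequate_body; assumption.
  - apply decode_neg; [exact Hs|].
    apply IH; [eauto using subform_trans, subform|].
    apply (adequate_child Hadequate); [simpl; lia|eauto using free_in].
  - destruct (adequate_var Hadequate) as (q & Hvisited & Hmu).
    exact (decode_var E Hs Hmu Hvisited).
Qed.

End DecodingEnc.

Theorem proposition2 (A L : Type) (name : form A L -> nat -> A)
    (f : A * nat -> A * nat) (phi : form A L) :
  closed phi ->
  NoDup (binders phi) ->
  bijective_map f ->
  (forall x k q, subform (Mu x k q) phi -> f (x, k) = (name (Mu x k q) k, k)) ->
  (exists psi, dec_s name (enc phi) phi [] psi) /\
  (forall psi, dec_s name (enc phi) phi [] psi -> eqf f phi psi).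
Proof.
  intros Hclosed Hdistinct _ Hrenames.
  apply (decode_subformula name f Hdistinct Hrenames).
  - apply sub_refl.
  - apply adequate_closed; exact Hclosed.
Qed.
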